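(* Let $\mathsf{K}$ be a congruence permutable variety. Then $\mathsf{K}$ has the weak ES property if and only if no finitely generated finitely subdirectly irreducible member of $\mathsf{K}$ has a subalgebra that is fully epic in $\mathsf{K}$.
   Context: A variety is a class of similar algebras closed under homomorphic images, subalgebras and direct products. It is congruence permutable if $\theta_1\circ\theta_2=\theta_2\circ\theta_1$ for all congruences $\theta_1,\theta_2$ of every member. $\mathsf{K}$ has the weak ES property if every $\mathsf{K}$-epimorphism (homomorphism $f\colon\mathbf{A}\to\mathbf{B}$ in $\mathsf{K}$ with $g\circ f=h\circ f\Rightarrow g=h$ for all homomorphisms $g,h$ from $\mathbf{B}$ to members of $\mathsf{K}$) between finitely generated members is surjective. An algebra is finitely subdirectly irreducible (FSI) if it is nontrivial and for every subdirect embedding into a finite product some projection is an isomorphism (equivalently, the identity congruence is meet irreducible in its congruence lattice). $\mathbf{A}\leq\mathbf{B}$ is epic in $\mathsf{K}$ if the inclusion is a $\mathsf{K}$-epimorphism; it is full in $\mathsf{K}$ if it is proper, almost total ($B=\mathrm{Sg}^{\mathbf{B}}(A\cup\{b\})$ for some $b$), and every congruence $\theta\neq\mathrm{id}_B$ of $\mathbf{B}$ relates each $b\in B$ to some $a\in A$; fully epic means full and epic. *)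

From Stdlib Require Import List.
From mathcomp Require Import all_boot.

Set Implicit Arguments.
Unset Strict Implicit.
Unset Printing Implicit Defensive.

Record signature := Signature {
  op_sym : Type;
  arity : op_sym -> nat
}.

Record algebra (S : signature) := Algebra {
  carrier :> Type;
  interp : forall f : op_sym S, ('I_(arity f) -> carrier) -> carrier
}.

Arguments interp {S} c f _ : rename.

Section UA.
Variable S : signature.

Definition is_hom (A B : algebra S) (h : A -> B) : Prop :=
  forall (f : op_sym S) (a : 'I_(arity f) -> A),
    h (interp _ f a) = interp _ f (fun i => h (a i)).

Definition prod_alg (I : Type) (A : I -> algebra S) : algebra S :=
  @Algebra S (forall i, A i)
    (fun f a => fun i => interp _ f (fun j => a j i)).

Definition subuniverse (A : algebra S) (P : A -> Prop) : Prop :=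
  forall (f : op_sym S) (a : 'I_(arity f) -> A),
    (forall i, P (a i)) -> P (interp _ f a).

Definition Sg (A : algebra S) (X : A -> Prop) : A -> Prop :=
  fun a => forall P, subuniverse P -> (forall x, X x -> P x) -> P a.

Definition fin_generated (A : algebra S) : Prop :=
  exists l : list A, forall a : A, Sg (fun x => In x l) a.

Definition congruence (A : algebra S) (th : A -> A -> Prop) : Prop :=
  (forall x, th x x) /\ (forall x y, th x y -> th y x) /\
  (forall x y z, th x y -> th y z -> th x z) /\
  (forall (f : op_sym S) (a b : 'I_(arity f) -> A),
      (forall i, th (a i) (b i)) -> th (interp _ f a) (interp _ f b)).

Definition FSI (A : algebra S) : Prop :=
  (exists x y : A, x <> y) /\
  forall th1 th2 : A -> A -> Prop, congruence th1 -> congruence th2 ->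
    (forall x y, th1 x y -> th2 x y -> x = y) ->
    (forall x y, th1 x y -> x = y) \/ (forall x y, th2 x y -> x = y).

Definition closed_H (K : algebra S -> Prop) : Prop :=
  forall (A B : algebra S) (h : A -> B),
    K A -> is_hom h -> (forall b, exists a, h a = b) -> K B.

Definition closed_S (K : algebra S -> Prop) : Prop :=
  forall (A B : algebra S) (h : A -> B),
    K B -> inhabited A -> is_hom h -> (forall x y, h x = h y -> x = y) -> K A.

Definition closed_P (K : algebra S -> Prop) : Prop :=
  forall (I : Type) (A : I -> algebra S),
    (forall i, K (A i)) -> K (prod_alg A).

Definition variety (K : algebra S -> Prop) : Prop :=
  (forall A, K A -> inhabited A) /\ closed_H K /\ closed_S K /\ closed_P K.

Definition cong_permutable (K : algebra S -> Prop) : Prop :=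
  forall A : algebra S, K A ->
  forall th1 th2 : A -> A -> Prop, congruence th1 -> congruence th2 ->
  forall x y, (exists z, th1 x z /\ th2 z y) <-> (exists z, th2 x z /\ th1 z y).

Definition K_epi (K : algebra S -> Prop) (A B : algebra S) (f : A -> B) : Prop :=
  K A /\ K B /\ is_hom f /\
  forall (C : algebra S) (g h : B -> C), K C -> is_hom g -> is_hom h ->
    (forall a, g (f a) = h (f a)) -> forall b, g b = h b.

Definition weak_ES (K : algebra S -> Prop) : Prop :=
  forall (A B : algebra S) (f : A -> B),
    fin_generated A -> fin_generated B -> K_epi K f ->
    forall b, exists a, f a = b.

Definition subalgebra (B : algebra S) (P : B -> Prop) : Prop :=
  subuniverse P /\ exists a, P a.

(* The inclusion of the subalgebra P into B is a K-epimorphism. *)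
Definition epic_in (K : algebra S -> Prop) (B : algebra S) (P : B -> Prop) : Prop :=
  forall (C : algebra S) (g h : B -> C), K C -> is_hom g -> is_hom h ->
    (forall a, P a -> g a = h a) -> forall b, g b = h b.

Definition full_in (K : algebra S -> Prop) (B : algebra S) (P : B -> Prop) : Prop :=
  (exists b, ~ P b) /\
  (exists b, forall c, Sg (fun x => P x \/ x = b) c) /\
  forall th : B -> B -> Prop, congruence th ->
    (exists x y, th x y /\ x <> y) ->
    forall b, exists a, P a /\ th b a.

Definition fully_epic_in (K : algebra S -> Prop) (B : algebra S) (P : B -> Prop) : Prop :=
  full_in K P /\ epic_in K P.

End UA.

From mathcomp Require Import all_boot.
From mathcomp Require boolp classical_sets.
From Stdlib Require Import List Classical ClassicalEpsilon.
From Stdlib Require Import FunctionalExtensionality PropExtensionality.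

(* If the weak ES property holds, a finitely generated member [B] has no proper epic
   subalgebra [P]: epic dominions are compact (a reduced-product argument), so each of the
   finitely many generators of [B] is dominated by a finitely generated subalgebra of [P]; the
   subalgebra generated by all of them is finitely generated and its inclusion into [B] is an
   epimorphism, hence onto.

   Conversely, let [f : A -> B] be a non-surjective epimorphism between finitely generated
   members.  Enlarge the image of [f] to a proper subalgebra [P] such that [B] is generated by
   [P] and one further element [x1], and divide [B] by a congruence maximal (Zorn) among those
   not relating [x1] to [P].  In the quotient the image of [P] is fully epic.  The quotient is
   also FSI: if two nontrivial congruences [psi1], [psi2] meet in the identity, the image [P']
   of [P] meets every class of each; by permutability the join of their traces on [P'] is a
   congruence of [P'], which transports to a congruence [nu] of the quotient (Goursat's
   lemma).  The canonical map modulo [nu] and the map "move along [psi2] into [P'], then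
   reduce modulo [nu]" are homomorphisms agreeing on [P'], hence everywhere by epicity, and
   this forces [P'] to be everything. *)

Set Implicit Arguments.
Unset Strict Implicit.
Unset Printing Implicit Defensive.

Section UniversalAlgebra.
Variable S : signature.
Implicit Types (K : algebra S -> Prop) (A B C : algebra S).

(** * Generated subalgebras, images and subalgebras *)

Lemma Sg_incl B (X : B -> Prop) x : X x -> Sg X x.
Proof. by move=> Xx P _; apply. Qed.

Lemma Sg_subuniverse B (X : B -> Prop) : subuniverse (Sg X).
Proof. by move=> f a Xa P sP XP; apply: (sP) => i; exact: Xa i P sP XP. Qed.

Lemma Sg_min B (X P : B -> Prop) :
  subuniverse P -> (forall x, X x -> P x) -> forall x, Sg X x -> P x.
Proof. by move=> sP XP x; apply. Qed.

Lemma Sg_mono B (X Y : B -> Prop) :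
  (forall x, X x -> Y x) -> forall x, Sg X x -> Sg Y x.
Proof. by move=> XY; apply: Sg_min (@Sg_subuniverse B Y) _ => x /XY /Sg_incl. Qed.

Definition image (T U : Type) (h : T -> U) (X : T -> Prop) : U -> Prop :=
  fun y => exists x, X x /\ h x = y.

Lemma image_subuniverse A B (h : A -> B) (P : A -> Prop) :
  is_hom h -> subuniverse P -> subuniverse (image h P).
Proof.
move=> hh sP f b /choice [a Ha]; exists (interp A f a); split.
  by apply: sP => i; case: (Ha i).
by rewrite hh; congr interp; apply: functional_extensionality => i; case: (Ha i).
Qed.

Lemma Sg_image A B (h : A -> B) (X : A -> Prop) :
  is_hom h -> forall a, Sg X a -> Sg (image h X) (h a).
Proof.
move=> hh; apply: (Sg_min (P := fun a => Sg (image h X) (h a))).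
  by move=> f a Ha; rewrite hh; apply: Sg_subuniverse.
by move=> x Xx; apply: Sg_incl; exists x.
Qed.

Lemma hom_comp A B C (g : A -> B) (h : B -> C) :
  is_hom g -> is_hom h -> is_hom (fun x => h (g x)).
Proof. by move=> hg hh f a; rewrite hg hh. Qed.

Lemma equalizer_subuniverse A B (g h : A -> B) :
  is_hom g -> is_hom h -> subuniverse (fun x => g x = h x).
Proof.
by move=> hg hh f a E; rewrite hg hh; congr interp; apply: functional_extensionality.
Qed.

Lemma fin_generated_image A B (h : A -> B) :
  is_hom h -> (forall b, exists a, h a = b) -> fin_generated A -> fin_generated B.
Proof.
move=> hh hsurj [X genX]; exists (map h X) => b; have [a <-] := hsurj b.
by apply: (Sg_mono _ (Sg_image hh (genX a))) => _ [x [Xx <-]]; apply: in_map.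
Qed.

Lemma sig_eq T (P : T -> Prop) (u v : {x | P x}) : proj1_sig u = proj1_sig v -> u = v.
Proof. by case: u v => [x Px] [y Py] /= E; subst y; rewrite (proof_irrelevance _ Px Py). Qed.

Section Subalgebra.
Variables (B : algebra S) (P : B -> Prop) (sP : subuniverse P).

Definition sub_alg : algebra S :=
  @Algebra S {x : B | P x}
    (fun f a => exist _ (interp B f (fun i => proj1_sig (a i)))
                       (sP (fun i => proj2_sig (a i)))).

Lemma val_hom : @is_hom S sub_alg B (@proj1_sig _ _).
Proof. by []. Qed.

Lemma sub_alg_in K : variety K -> K B -> (exists a, P a) -> K sub_alg.
Proof.
case=> _ [_ [closedS _]] KB [a Pa].
apply: (closedS sub_alg B _ KB (inhabits (exist _ a Pa)) val_hom) => x y; exact: sig_eq.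
Qed.

Lemma Sg_sub_alg (Y : sub_alg -> Prop) (a : sub_alg) :
  Sg (image (@proj1_sig _ _) Y) (proj1_sig a) -> Sg Y a.
Proof.
pose Q x := exists h : P x, Sg Y (exist _ x h).
have sQ : subuniverse Q.
  move=> f b Qb.
  have h i : P (b i) by case: (Qb i).
  exists (sP h).
  have -> : exist _ (interp B f b) (sP h) = interp sub_alg f (fun i => exist _ (b i) (h i)).
    exact: sig_eq.
  apply: Sg_subuniverse => i; case: (Qb i) => hi.
  by rewrite (proof_irrelevance _ hi (h i)).
case: a => x Px /(Sg_min sQ) [ | h Yx]; last by rewrite (proof_irrelevance _ Px h).
by move=> _ [[y Py] [Yy <-]]; exists Py; apply: Sg_incl.
Qed.

End Subalgebra.

Lemma lift_list T (P : T -> Prop) (l : list T) :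
  (forall x, In x l -> P x) -> exists l' : list {x | P x}, map (@proj1_sig _ _) l' = l.
Proof.
elim: l => [|x l IH] Pl; first by exists nil.
have [l' <-] := IH (fun y ly => Pl y (or_intror ly)).
by exists (exist _ x (Pl x (or_introl erefl)) :: l').
Qed.

Lemma sub_alg_fin_generated B (L : list B) :
  fin_generated (sub_alg (@Sg_subuniverse B (fun x => In x L))).
Proof.
have [l El] := lift_list (fun x => @Sg_incl B (fun x => In x L) x).
exists l => a; apply: Sg_sub_alg.
apply: (Sg_mono _ (proj2_sig a)) => x Lx.
by move: Lx; rewrite -{1}El => /in_map_iff [y [<- ly]]; exists y.
Qed.

(** * Congruences and quotients *)

Lemma eq_congruence B : congruence (fun x y : B => x = y).
Proof.
split; [by [] | split; [by [] | split; first by move=> x y z -> ->]].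
by move=> f a b E; congr interp; apply: functional_extensionality.
Qed.

Lemma congruence_pullback A B (h : A -> B) (psi : B -> B -> Prop) :
  is_hom h -> congruence psi -> congruence (fun x y => psi (h x) (h y)).
Proof.
move=> hh [refl [sym [trans compat]]]; split; [|split; [|split]].
- by move=> x; apply: refl.
- by move=> x y; apply: sym.
- by move=> x y z; apply: trans.
- by move=> f a b ab; rewrite !hh; apply: compat.
Qed.

Lemma nontrivial_of_not_discrete B (psi : B -> B -> Prop) :
  ~ (forall x y, psi x y -> x = y) -> exists x y, psi x y /\ x <> y.
Proof.
move=> ndisc; apply: NNPP => none; apply: ndisc => x y xy.
by apply: NNPP => nxy; apply: none; exists x, y.
Qed.

Section Quotient.
Variables (B : algebra S) (th : B -> B -> Prop).

Definition quot_carrier : Type := {Q : B -> Prop | exists x, Q = th x}.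

Definition qrep (c : quot_carrier) : B :=
  proj1_sig (constructive_indefinite_description _ (proj2_sig c)).

Definition quot_alg : algebra S :=
  @Algebra S quot_carrier
    (fun f a => exist _ (th (interp B f (fun i => qrep (a i)))) (ex_intro _ _ erefl)).

Definition qcls (x : B) : quot_alg := exist _ (th x) (ex_intro _ x erefl).

Lemma qrepK (c : quot_alg) : qcls (qrep c) = c.
Proof.
by apply: sig_eq; rewrite /qrep; case: constructive_indefinite_description => x /= ->.
Qed.

Hypothesis cth : congruence th.

Lemma eq_qcls x y : qcls x = qcls y <-> th x y.
Proof.
case: cth => refl [sym [trans _]]; split => [/(f_equal (@proj1_sig _ _)) /= -> | xy].
  exact: refl.
apply: sig_eq; apply: functional_extensionality => z /=.
by apply: propositional_extensionality; split; [apply: trans; apply: sym | apply: trans].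
Qed.

Lemma qcls_hom : @is_hom S B quot_alg qcls.
Proof.
move=> f a /=; apply/eq_qcls; case: cth => _ [_ [_ compat]]; apply: compat => i.
by apply/eq_qcls; rewrite qrepK.
Qed.

Lemma qcls_surj (c : quot_alg) : exists x, qcls x = c.
Proof. by exists (qrep c); apply: qrepK. Qed.

Lemma quot_alg_in K : variety K -> K B -> K quot_alg.
Proof. by case=> _ [closedH _] KB; apply: closedH KB qcls_hom qcls_surj. Qed.

End Quotient.

(** * Epic subalgebras *)

Lemma epic_in_mono K B (P Q : B -> Prop) :
  (forall x, P x -> Q x) -> epic_in K P -> epic_in K Q.
Proof. by move=> PQ Pepi C g h KC hg hh E; apply: Pepi => // a /PQ /E. Qed.

Lemma epic_in_image K A B (f : A -> B) (P : A -> Prop) :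
  is_hom f -> (forall b, exists a, f a = b) -> epic_in K P -> epic_in K (image f P).
Proof.
move=> hf fsurj Pepi C g h KC hg hh E b; have [a <-] := fsurj b.
apply: (Pepi C (fun x => g (f x)) (fun x => h (f x))) => //; try exact: hom_comp.
by move=> x Px; apply: E; exists x.
Qed.

Lemma epic_in_range K A B (f : A -> B) :
  K_epi K f -> epic_in K (image f (fun _ => True)).
Proof.
case=> _ [_ [_ fepi]] C g h KC hg hh E; apply: fepi => // a.
by apply: E; exists a.
Qed.

Lemma In_enum (T : finType) (x : T) : In x (enum T).
Proof.
have : x \in enum T by rewrite mem_enum.
by elim: (enum T) => [|y s IH] //= /predU1P [->|/IH]; [left | right].
Qed.

Lemma incl_concat_enum T n (w : 'I_n -> list T) i :
  incl (w i) (concat (map w (enum 'I_n))).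
Proof.
by move=> x wx; apply/in_concat; exists (w i); split; [apply: in_map; apply: In_enum |].
Qed.

Section EventualEquality.
Variables (T : Type) (C : list T -> algebra S).

Definition eventually_eq (x y : prod_alg C) : Prop :=
  exists l0, forall l, incl l0 l -> x l = y l.

Lemma eventually_eq_congruence : congruence eventually_eq.
Proof.
split; [|split; [|split]].
- by move=> x; exists nil.
- by move=> x y [l0 E]; exists l0 => l /E.
- move=> x y z [l1 E1] [l2 E2]; exists (l1 ++ l2) => l l12.
  by rewrite E1 ?E2 // => u lu; apply: l12; apply: in_or_app; [right | left].
- move=> f a b /choice [w Ew]; exists (concat (map w (enum 'I_(arity f)))) => l wl /=.
  by congr interp; apply: functional_extensionality => i; apply: Ew;
    apply: incl_tran wl; apply: incl_concat_enum.
Qed.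

End EventualEquality.

Arguments eventually_eq {T} C x y.

Definition epic_at K B (Q : B -> Prop) (b : B) : Prop :=
  forall C (g h : B -> C), K C -> is_hom g -> is_hom h ->
    (forall a, Q a -> g a = h a) -> g b = h b.

Record separator K B (Q : B -> Prop) (b : B) := Separator {
  sep_alg : algebra S;
  sep_l : B -> sep_alg;
  sep_r : B -> sep_alg;
  sep_in : K sep_alg;
  sep_l_hom : is_hom sep_l;
  sep_r_hom : is_hom sep_r;
  sep_agree : forall a, Q a -> sep_l a = sep_r a;
  sep_differ : sep_l b <> sep_r b }.

Lemma separator_of_not_epic_at K B (Q : B -> Prop) b :
  ~ epic_at K Q b -> inhabited (separator K Q b).
Proof.
move=> notQb; apply: NNPP => nosep; apply: notQb => C g h KC hg hh E.
by apply: NNPP => gh; apply: nosep; constructor; apply: (Separator KC hg hh E gh).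
Qed.

(* By contradiction: pick a separator for every finite list of elements of [P]; in their
   product modulo eventual equality the two induced maps agree on [P] but not on [b]. *)
Lemma epic_at_finite K B (P : B -> Prop) b : variety K -> epic_at K P b ->
  exists l : list B, (forall x, In x l -> P x) /\ epic_at K (Sg (fun x => In x l)) b.
Proof.
move=> HK Pb; apply: NNPP => nofin.
have sep (l : list {x : B | P x}) :
    separator K (Sg (fun x => In x (map (@proj1_sig _ _) l))) b.
  apply: (epsilon _ (fun _ => True)); apply: separator_of_not_epic_at => lb.
  apply: nofin; exists (map (@proj1_sig _ _) l); split => // x.
  by case/in_map_iff => [[y Py] [<- _]].
pose Cs l := sep_alg (sep l).
pose G (x : B) : prod_alg Cs := fun l => sep_l (sep l) x.
pose H (x : B) : prod_alg Cs := fun l => sep_r (sep l) x.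
have hG : is_hom G.
  by move=> f a; apply: functional_extensionality_dep => l; apply: sep_l_hom.
have hH : is_hom H.
  by move=> f a; apply: functional_extensionality_dep => l; apply: sep_r_hom.
have ev := eventually_eq_congruence Cs.
have KCs : K (prod_alg Cs) by case: HK => _ [_ [_ closedP]]; apply: closedP => l; apply: sep_in.
have /(eq_qcls ev) [l0 /(_ l0 (incl_refl _))] :
    qcls (eventually_eq Cs) (G b) = qcls (eventually_eq Cs) (H b).
  pose q := qcls (eventually_eq Cs).
  apply: (Pb (quot_alg (eventually_eq Cs)) (fun x => q (G x)) (fun x => q (H x))).
  - exact: quot_alg_in.
  - exact: hom_comp hG (qcls_hom ev).
  - exact: hom_comp hH (qcls_hom ev).
  move=> a Pa; apply/eq_qcls => //; exists (exist _ a Pa :: nil) => l al.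
  apply: sep_agree; apply: Sg_incl.
  by apply: (in_map (@proj1_sig _ _) _ (exist _ a Pa)); apply: al; left.
exact: sep_differ.
Qed.

Lemma weak_ES_epic_total K B (P : B -> Prop) :
  variety K -> weak_ES K -> K B -> fin_generated B -> subalgebra P -> epic_in K P ->
  forall b, P b.
Proof.
move=> HK HW KB [X genX] [sP [p0 Pp0]] Pepi.
have /choice [lx Hlx] : forall x : B, exists l : list B,
    (forall y, In y l -> P y) /\ epic_at K (Sg (fun y => In y l)) x.
  by move=> x; apply: epic_at_finite => // C g h KC hg hh E; apply: Pepi.
(* [p0] keeps the subalgebra nonempty when [X] is. *)
pose L := p0 :: concat (map lx X).
have LP : forall y, Sg (fun y => In y L) y -> P y.
  apply: Sg_min => // y [<- // | /in_concat [l [/in_map_iff [x [<- _]] ly]]].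
  exact: (Hlx x).1.
have Lepi : epic_in K (Sg (fun y => In y L)).
  move=> C g h KC hg hh E b; apply: (Sg_min (equalizer_subuniverse hg hh)) (genX b) => x Xx.
  apply: (Hlx x).2 => // a la; apply: E; apply: (Sg_mono _ la) => y ly; right.
  by apply/in_concat; exists (lx x); split => //; apply: in_map.
pose A := sub_alg (@Sg_subuniverse B (fun y => In y L)).
have KA : K A by apply: (sub_alg_in _ HK KB); exists p0; apply: Sg_incl; left.
have epiA : K_epi K (@proj1_sig _ _ : A -> B).
  split; [done | split; [done | split; first exact: val_hom]].
  move=> C g h KC hg hh E; apply: Lepi => // a La; exact: (E (exist _ a La)).
move=> b; have [a <-] := HW A B _ (sub_alg_fin_generated L) (ex_intro _ X genX) epiA b.
exact: LP (proj2_sig a).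
Qed.

(** * Saturating congruences *)

Definition saturates B (th : B -> B -> Prop) (P : B -> Prop) : Prop :=
  forall x, exists p, P p /\ th x p.

Lemma saturates_Sg B (th : B -> B -> Prop) (P X : B -> Prop) :
  congruence th -> subuniverse P -> (forall x, X x -> exists p, P p /\ th x p) ->
  forall b, Sg X b -> exists p, P p /\ th b p.
Proof.
case=> _ [_ [_ compat]] sP Xsat; apply: Sg_min => // f a /choice [p Hp].
exists (interp B f p); split; first by apply: sP => i; case: (Hp i).
by apply: compat => i; case: (Hp i).
Qed.

Lemma saturates_generator B (th : B -> B -> Prop) (P : B -> Prop) (x1 : B) :
  congruence th -> subuniverse P -> (forall b, Sg (fun y => P y \/ y = x1) b) ->
  saturates th P <-> exists p, P p /\ th x1 p.
Proof.
move=> cth sP gen; split=> [/(_ x1) // | [p1 [Pp1 x1p1]]] b.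
apply: saturates_Sg (gen b) => // y [Py | ->]; last by exists p1.
by exists y; split => //; case: cth.
Qed.

Lemma almost_total_extension B (P : B -> Prop) (l : list B) :
  subuniverse P -> (exists b, ~ P b) -> (forall b, Sg (fun y => P y \/ In y l) b) ->
  exists (P' : B -> Prop) (x1 : B), [/\ subuniverse P', forall y, P y -> P' y, ~ P' x1
    & forall b, Sg (fun y => P' y \/ y = x1) b].
Proof.
elim: l P => [|x l IH] P sP [b nPb] gen.
  by exfalso; apply: nPb; apply: (Sg_min sP _ (gen b)) => y [Py | []].
have [[c nxc] | genx] := classic (exists c, ~ Sg (fun y => P y \/ y = x) c); last first.
  have {}genx c : Sg (fun y => P y \/ y = x) c by apply: NNPP => nc; apply: genx; exists c.
  by exists P, x; split => // Px; apply: nPb; apply: (Sg_min sP _ (genx b)) => y [Py | ->].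
have [|||P' [x1 [sP' PP' nP'x1 gen']]] := IH (Sg (fun y => P y \/ y = x)).
- exact: Sg_subuniverse.
- by exists c.
- move=> d; apply: (Sg_mono _ (gen d)) => y [Py | [<- | ly]].
  + by left; apply: Sg_incl; left.
  + by left; apply: Sg_incl; right.
  + by right.
by exists P', x1; split => // y Py; apply: PP'; apply: Sg_incl; left.
Qed.

Section ChainUnion.
Variables (B : algebra S) (F : (B -> B -> Prop) -> Prop).
Hypothesis congF : forall th, F th -> congruence th.
Hypothesis chainF : forall th1 th2, F th1 -> F th2 ->
  (forall x y, th1 x y -> th2 x y) \/ (forall x y, th2 x y -> th1 x y).

(* [F] together with the identity congruence, so that the union of an empty chain is the
   identity rather than the empty relation. *)
Definition chain_member (th : B -> B -> Prop) : Prop := F th \/ th = (fun x y => x = y).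

Definition chain_union (x y : B) : Prop := exists th, chain_member th /\ th x y.

Lemma chain_member_congruence th : chain_member th -> congruence th.
Proof. by case=> [/congF // | ->]; apply: eq_congruence. Qed.

Lemma chain_member_total th1 th2 : chain_member th1 -> chain_member th2 ->
  (forall x y, th1 x y -> th2 x y) \/ (forall x y, th2 x y -> th1 x y).
Proof.
case=> [F1 | ->]; case=> [F2 | ->]; first exact: chainF.
- by right=> x y ->; case: (congF F1).
- by left=> x y ->; case: (congF F2).
- by left.
Qed.

Lemma chain_union_list (l : list (B * B)) :
  (forall pr, In pr l -> chain_union pr.1 pr.2) ->
  exists th, chain_member th /\ forall pr, In pr l -> th pr.1 pr.2.
Proof.
elim: l => [|pr l IH] Ul; first by exists (fun x y => x = y); split; [right|].
have [th [Gth E]] := IH (fun pr' l_pr' => Ul pr' (or_intror l_pr')).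
have [th' [Gth' th'pr]] := Ul pr (or_introl erefl).
case: (chain_member_total Gth Gth') => sub.
- by exists th'; split => // pr' [<- // | /E /sub].
- by exists th; split => // pr' [<- | /E //]; apply: sub.
Qed.

Lemma chain_union_congruence : congruence chain_union.
Proof.
split; [|split; [|split]].
- by move=> x; exists (fun x y => x = y); split; [right|].
- move=> x y [th [Gth xy]]; exists th; split => //.
  by case: (chain_member_congruence Gth) => _ [sym _]; apply: sym.
- move=> x y z xy yz; have [|th [Gth E]] := chain_union_list (l := [:: (x, y); (y, z)]).
    by move=> pr [<- | [<- | []]].
  exists th; split => //; case: (chain_member_congruence Gth) => _ [_ [trans _]].
  by apply: (trans _ y); [apply: (E (x, y)) | apply: (E (y, z))]; [left | right; left].
- move=> f a b ab.
  have [|th [Gth E]] := chain_union_list (l := map (fun i => (a i, b i)) (enum 'I_(arity f))).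
    by move=> pr /in_map_iff [i [<- _]]; apply: ab.
  exists th; split => //; case: (chain_member_congruence Gth) => _ [_ [_ compat]].
  apply: compat => i; apply: (E (a i, b i)).
  by apply: (in_map (fun i => (a i, b i))); apply: In_enum.
Qed.

End ChainUnion.

Lemma maximal_nonsaturating_congruence B (P : B -> Prop) (x1 : B) :
  subuniverse P -> ~ P x1 -> (forall b, Sg (fun y => P y \/ y = x1) b) ->
  exists th : B -> B -> Prop, [/\ congruence th, ~ saturates th P
    & forall th', congruence th' -> (forall x y, th x y -> th' x y) -> ~ saturates th' P ->
        forall x y, th' x y -> th x y].
Proof.
move=> sP nPx1 gen.
pose T := {th : B -> B -> Prop | congruence th /\ ~ saturates th P}.
pose R (s t : T) := boolp.asbool (forall x y, proj1_sig s x y -> proj1_sig t x y).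
have [t tmax] : exists t : T, forall s, R t s -> s = t.
  apply: classical_sets.Zorn.
  - by move=> s; apply/boolp.asboolP.
  - by move=> r s t /boolp.asboolP rs /boolp.asboolP st; apply/boolp.asboolP => x y /rs /st.
  - move=> s t /boolp.asboolP st /boolp.asboolP ts; apply: sig_eq.
    apply: functional_extensionality => x; apply: functional_extensionality => y.
    by apply: propositional_extensionality; split => [/st | /ts].
  - move=> A totA; pose F th := exists s, A s /\ proj1_sig s = th.
    have congF th : F th -> congruence th by case=> s [_ <-]; case: (proj2_sig s).
    have chainF th1 th2 : F th1 -> F th2 ->
        (forall x y, th1 x y -> th2 x y) \/ (forall x y, th2 x y -> th1 x y).
      move=> [s1 [As1 <-]] [s2 [As2 <-]].
      by case: (totA s1 s2 As1 As2) => /boolp.asboolP; [left | right].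
    have cU := chain_union_congruence congF chainF.
    have nsatU : ~ saturates (chain_union F) P.
      case/(saturates_generator cU sP gen) => p [Pp [th [[[s [As <-]] | ->] x1p]]]; last first.
        by apply: nPx1; rewrite x1p.
      by case: (proj2_sig s) => cs; apply; apply/(saturates_generator cs sP gen); exists p.
    exists (exist _ (chain_union F) (conj cU nsatU)) => s As; apply/boolp.asboolP => x y sxy.
    by exists (proj1_sig s); split => //; left; exists s.
case: t tmax => th [cth nsat] /= tmax.
exists th; split => // th' cth' sub nsat' x y th'xy.
have := tmax (exist _ th' (conj cth' nsat')); rewrite /R /=.
by move=> /(_ (introT (boolp.asboolP _) sub)) [<-].
Qed.

Section SaturatingPair.
Variables (K : algebra S -> Prop) (B : algebra S) (P : B -> Prop).
Variables (psi1 psi2 : B -> B -> Prop).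
Hypotheses (HK : variety K) (HCP : cong_permutable K) (KB : K B).
Hypotheses (sP : subuniverse P) (neP : exists p, P p).
Hypotheses (c1 : congruence psi1) (c2 : congruence psi2).
Hypotheses (sat1 : saturates psi1 P) (sat2 : saturates psi2 P).

Definition link (p q : B) : Prop := exists r, [/\ P r, psi1 p r & psi2 r q].

Lemma link_swap p q : P p -> P q -> (exists r, [/\ P r, psi2 p r & psi1 r q]) -> link p q.
Proof.
move=> Pp Pq [r [Pr pr rq]].
have KP : K (sub_alg sP) by apply: sub_alg_in.
have [|[z Pz] [/= pz zq]] := (HCP KP (congruence_pullback (@val_hom B P sP) c1)
  (congruence_pullback (@val_hom B P sP) c2) (exist _ p Pp) (exist _ q Pq)).2.
  by exists (exist _ r Pr).
by exists z.
Qed.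

Lemma link_sym p q : P p -> P q -> link p q -> link q p.
Proof.
case: c1 c2 => _ [sym1 _] [_ [sym2 _]] Pp Pq [r [Pr pr rq]].
by apply: link_swap => //; exists r; split; [| apply: sym2 | apply: sym1].
Qed.

Lemma link_trans p q s : P p -> P q -> P s -> link p q -> link q s -> link p s.
Proof.
case: c1 c2 => _ [_ [trans1 _]] [_ [_ [trans2 _]]] Pp Pq Ps [r [Pr pr rq]] [r' [Pr' qr' r's]].
have [z [Pz rz zr']] : link r r' by apply: link_swap => //; exists q.
by exists z; split; [| apply: trans1 pr rz | apply: trans2 zr' r's].
Qed.

Lemma link_psi1 p q : P q -> psi1 p q -> link p q.
Proof. by move=> Pq pq; exists q; split => //; case: c2. Qed.

Lemma link_psi2 p q : P p -> psi2 p q -> link p q.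
Proof. by move=> Pp pq; exists p; split => //; case: c1. Qed.

(* The [nu] of the proof idea.  Via [B/psi1 ~ P/psi1], the congruence of [B] corresponding to the join of the traces of
   [psi1] and [psi2] on [P] ([link] on [P], a congruence by permutability): Goursat's lemma
   for the subdirect product [B <= B/psi1 x B/psi2]. *)
Definition linked (x y : B) : Prop :=
  exists p q, [/\ P p, P q, psi1 x p, psi1 y q & link p q].

Lemma linked_congruence : congruence linked.
Proof.
have [refl1 [sym1 [trans1 compat1]]] := c1; have [_ [_ [_ compat2]]] := c2.
split; [|split; [|split]].
- move=> x; have [p [Pp xp]] := sat1 x.
  by exists p, p; split => //; apply: link_psi1.
- by move=> x y [p [q [Pp Pq xp yq pq]]]; exists q, p; split => //; apply: link_sym.
- move=> x y z [p [q [Pp Pq xp yq pq]]] [q' [s [Pq' Ps yq' zs pq']]].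
  exists p, s; split => //; apply: link_trans pq (link_trans _ _ _ _ pq') => //.
  by apply: link_psi1 => //; apply: trans1 (sym1 _ _ yq) yq'.
- move=> f a b ab.
  have /choice [pq Hpq] : forall i, exists pq : B * B,
      [/\ P pq.1, P pq.2, psi1 (a i) pq.1, psi1 (b i) pq.2 & link pq.1 pq.2].
    by move=> i; case: (ab i) => p [q H]; exists (p, q).
  have /choice [r Hr] : forall i, exists r, [/\ P r, psi1 (pq i).1 r & psi2 r (pq i).2].
    by move=> i; case: (Hpq i) => _ _ _ _ [r H]; exists r.
  exists (interp B f (fun i => (pq i).1)), (interp B f (fun i => (pq i).2)).
  split; [apply: sP | apply: sP | apply: compat1 | apply: compat1 |] => [i|i|i|i|];
    try by case: (Hpq i).
  exists (interp B f r).
  by split; [apply: sP | apply: compat1 | apply: compat2] => i; case: (Hr i).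
Qed.

Lemma linked_psi2 p q : P p -> P q -> psi2 p q -> linked p q.
Proof.
by move=> Pp Pq pq; exists p, q; split => //; [case: c1 | case: c1 | apply: link_psi2].
Qed.

Hypothesis meet_discrete : forall x y, psi1 x y -> psi2 x y -> x = y.

Lemma epic_saturating_pair_total : epic_in K P -> forall x, P x.
Proof.
have [_ [sym1 [trans1 _]]] := c1; have [_ [sym2 [trans2 compat2]]] := c2.
move=> Pepi x; have /choice [rep Hrep] := sat2.
pose q := qcls linked; have hq : is_hom q := qcls_hom linked_congruence.
have hqrep : is_hom (fun y => q (rep y)).
  move=> f a; rewrite -hq; apply/(eq_qcls linked_congruence).
  apply: linked_psi2; first by case: (Hrep (interp B f a)).
    by apply: sP => i; case: (Hrep (a i)).
  apply: trans2 (sym2 _ _ (Hrep _).2) _; apply: compat2 => i; exact: (Hrep (a i)).2.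
have /(eq_qcls linked_congruence) [p [s [Pp Ps xp reps ps]]] : q x = q (rep x).
  apply: (Pepi _ q (fun y => q (rep y))) => //.
    exact: (quot_alg_in linked_congruence HK KB).
  by move=> p Pp; apply/(eq_qcls linked_congruence); apply: linked_psi2 => //; case: (Hrep p).
have [r [Pr pr rrep]] : link p (rep x).
  apply: link_trans ps _ => //; first by case: (Hrep x).
  by apply: link_psi1; [case: (Hrep x) | apply: sym1].
by rewrite (meet_discrete (trans1 _ _ _ xp pr) (trans2 _ _ _ (Hrep x).2 (sym2 _ _ rrep))).
Qed.

End SaturatingPair.

Section MaximalQuotient.
Variables (B : algebra S) (P : B -> Prop) (x1 : B) (th : B -> B -> Prop).
Hypotheses (sP : subuniverse P) (gen : forall b, Sg (fun y => P y \/ y = x1) b).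
Hypotheses (cth : congruence th) (nsat : ~ saturates th P).
Hypothesis thmax : forall th', congruence th' -> (forall x y, th x y -> th' x y) ->
  ~ saturates th' P -> forall x y, th' x y -> th x y.

Local Notation q := (qcls th).

Lemma quotient_saturated psi :
  congruence psi -> (exists u v, psi u v /\ u <> v) -> saturates psi (image q P).
Proof.
move=> cpsi [u [v [uv nuv]]].
have cpb := congruence_pullback (qcls_hom cth) cpsi.
have thpb x y : th x y -> psi (q x) (q y).
  by move=> /(eq_qcls cth) ->; case: cpsi.
have [satpb | nsatpb] := classic (saturates (fun x y => psi (q x) (q y)) P).
  move=> c; have [x <-] := qcls_surj c; have [p [Pp xp]] := satpb x.
  by exists (q p); split => //; exists p.
have [x ux] := qcls_surj u; have [y vy] := qcls_surj v.
case: nuv; rewrite -ux -vy; apply/(eq_qcls cth); apply: (thmax cpb thpb nsatpb).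
by rewrite ux vy.
Qed.

Lemma quotient_image_x1 : ~ image q P (q x1).
Proof.
case=> p [Pp /(eq_qcls cth) px1]; apply: nsat; apply/(saturates_generator cth sP gen).
by exists p; split => //; case: cth => _ [sym _]; apply: sym.
Qed.

Lemma quotient_full K : full_in K (image q P).
Proof.
split; first by exists (q x1); apply: quotient_image_x1.
split; last by move=> psi cpsi ntpsi; apply: quotient_saturated.
exists (q x1) => c; have [b <-] := qcls_surj c.
apply: (Sg_mono _ (Sg_image (qcls_hom cth) (gen b))) => _ [y [[Py | ->] <-]]; last by right.
by left; exists y.
Qed.

Lemma quotient_FSI K : variety K -> cong_permutable K -> K B -> (exists p, P p) ->
  epic_in K (image q P) -> FSI (quot_alg th).
Proof.
move=> HK HCP KB [p0 Pp0] epi; split.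
  by exists (q x1), (q p0) => E; apply: quotient_image_x1; rewrite E; exists p0.
move=> psi1 psi2 c1 c2 meet.
have [disc1 | /nontrivial_of_not_discrete nt1] := classic (forall x y, psi1 x y -> x = y).
  by left.
have [disc2 | /nontrivial_of_not_discrete nt2] := classic (forall x y, psi2 x y -> x = y).
  by right.
exfalso; apply: quotient_image_x1.
apply: (epic_saturating_pair_total (K := K) (psi1 := psi1) (psi2 := psi2)) => //.
- exact: (quot_alg_in cth HK KB).
- exact: (image_subuniverse (qcls_hom cth) sP).
- by exists (q p0), p0.
- exact: quotient_saturated.
- exact: quotient_saturated.
Qed.

End MaximalQuotient.

Lemma weak_ES_of_no_fully_epic K : variety K -> cong_permutable K ->
  ~ (exists B : algebra S, K B /\ fin_generated B /\ FSI B /\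
       exists P : B -> Prop, subalgebra P /\ fully_epic_in K P) ->
  weak_ES K.
Proof.
move=> HK HCP none A B f _ [X genX] epif b0; apply: NNPP => nb0.
have [KA [KB [hf _]]] := epif.
pose P0 := image f (fun _ => True).
have sP0 : subuniverse P0 by apply: image_subuniverse.
have nP0 : exists b, ~ P0 b by exists b0 => - [a [_ fa]]; apply: nb0; exists a.
have genP0 b : Sg (fun y => P0 y \/ In y X) b by apply: (Sg_mono _ (genX b)) => x Xx; right.
have [P1 [x1 [sP1 P01 nP1x1 gen]]] := almost_total_extension sP0 nP0 genP0.
have [th [cth nsat thmax]] := maximal_nonsaturating_congruence sP1 nP1x1 gen.
have [a0] : inhabited A by case: HK => inh _; apply: inh.
have P1fa0 : P1 (f a0) by apply: P01; exists a0.
have epi : epic_in K (image (qcls th) P1).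
  apply: epic_in_image (qcls_hom cth) (@qcls_surj _ _) _.
  exact: epic_in_mono P01 (epic_in_range epif).
apply: none; exists (quot_alg th); split; first exact: quot_alg_in.
split; first exact: fin_generated_image (qcls_hom cth) (@qcls_surj _ _) (ex_intro _ X genX).
split; first exact: (quotient_FSI sP1 gen cth nsat thmax HK HCP KB (ex_intro _ _ P1fa0) epi).
exists (image (qcls th) P1); split; last by split => //; apply: quotient_full.
split; first by apply: image_subuniverse => //; apply: qcls_hom.
by exists (qcls th (f a0)), (f a0).
Qed.

End UniversalAlgebra.

Unset Implicit Arguments.

Theorem mainTheorem11 (S : signature) (K : algebra S -> Prop) :
  variety K -> cong_permutable K ->
  (weak_ES K <->
   ~ (exists B : algebra S, K B /\ fin_generated B /\ FSI B /\
        exists P : B -> Prop, subalgebra P /\ fully_epic_in K P)).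
Proof.
move=> HK HCP; split; last exact: weak_ES_of_no_fully_epic.
move=> HW [B [KB [fgB [_ [P [subP [[[b nPb] _] Pepi]]]]]]].
exact: nPb (weak_ES_epic_total HK HW KB fgB subP Pepi b).
Qed.
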